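(* Let $G$ be a graph of order $n\ge 4$. Then $\tau(G)=n-2$ if and only if $G$ is isomorphic to one of: (a) the complete split graph $K_{n-2}\vee\overline{K_2}$; (b) $K_1\vee(K_1+K_{n-2})$; (c) the complete bipartite graph $K_{2,n-2}$; (d) $\overline{K_{n-2}}\vee K_2$.
   Context: Graphs are finite, simple, connected. $+$ denotes disjoint union, $\vee$ the join, $\overline{H}$ the complement. Two vertices $u,v$ are twins if $N(u)\setminus\{v\}=N(v)\setminus\{u\}$; the twin number $\tau(G)$ is the maximum cardinality of an equivalence class of the twin relation. *)

From mathcomp Require Import all_boot.
Set Implicit Arguments. Unset Strict Implicit. Unset Printing Implicit Defensive.

Definition simple_graph (T : finType) (e : rel T) : Prop :=
  symmetric e /\ irreflexive e.

Definition connected_graph (T : finType) (e : rel T) : Prop :=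
  forall x y : T, connect e x y.

Definition nbhd (T : finType) (e : rel T) (u : T) : {set T} := [set w | e u w].

Definition twins (T : finType) (e : rel T) (u v : T) : bool :=
  nbhd e u :\ v == nbhd e v :\ u.

Definition twin_class (T : finType) (e : rel T) (u : T) : {set T} :=
  [set v | twins e u v].

Definition twin_number (T : finType) (e : rel T) : nat :=
  \max_(u : T) #|twin_class e u|.

Definition isomorphic (T : finType) (e : rel T) (n : nat) (g : rel 'I_n) : Prop :=
  exists f : T -> 'I_n, bijective f /\ forall x y : T, e x y = g (f x) (f y).

(* The four model graphs on vertex set 'I_n; vertices 0 and 1 are the
   distinguished ones, the remaining n-2 vertices form the other part. *)
Definition special (n : nat) (x : 'I_n) : bool := (val x < 2).

(* (a) K_{n-2} v complement(K_2): all pairs adjacent except the pair {0,1} *)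
Definition graph_a (n : nat) : rel 'I_n :=
  fun x y => (x != y) && ~~ (special x && special y).

(* (b) K_1 v (K_1 + K_{n-2}): vertex 0 is universal, vertex 1 is adjacent
   only to 0, vertices >= 2 form a clique *)
Definition graph_b (n : nat) : rel 'I_n :=
  fun x y => (x != y) &&
    ((val x == 0) || (val y == 0) || ((val x != 1) && (val y != 1))).

(* (c) K_{2,n-2}: parts {0,1} and the rest *)
Definition graph_c (n : nat) : rel 'I_n :=
  fun x y => special x != special y.

(* (d) complement(K_{n-2}) v K_2: {0,1} is an edge joined to everything,
   vertices >= 2 independent *)
Definition graph_d (n : nat) : rel 'I_n :=
  fun x y => (x != y) && (special x || special y).

Arguments graph_a n : clear implicits.
Arguments graph_b n : clear implicits.
Arguments graph_c n : clear implicits.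
Arguments graph_d n : clear implicits.

From mathcomp Require Import all_boot perm zify.
Set Implicit Arguments. Unset Strict Implicit. Unset Printing Implicit Defensive.

(** If the twin number is n-2, a largest twin class C misses exactly two
    vertices a and b.  Vertices of C agree outside C, and C is a clique or an
    independent set, so the graph is determined by four bits: whether C is a
    clique, whether a (resp. b) is joined to C, and whether ab is an edge.
    Maximality of C says that neither a nor b is a twin of a vertex of C, which
    excludes six of the sixteen patterns; connectivity excludes five more, and
    the five survivors are the four model graphs, K_1 v (K_1 + K_(n-2)) in both
    orientations of the pair.  Conversely, in each model graph the n-2 vertices
    off the pair form a twin class and the two others are not twins of them. *)

Lemma pair_kind (T : eqType) (a b z : T) :
  [\/ z = a, z = b | (z == a) = false /\ (z == b) = false].
Proof.
case: (eqVneq z a) => [->|za]; first exact: Or31.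
by case: (eqVneq z b) => [->|zb]; [apply: Or32 | apply: Or33].
Qed.

(* The vertices other than a and b form a clique iff [inC]; a (resp. b) is
   adjacent to all of them iff [aC] (resp. [bC]) and to none otherwise; [ab]
   decides the edge ab. *)
Definition pair_shaped (T : finType) (e : rel T) (a b : T) (inC aC bC ab : bool) : Prop :=
  forall x y, e x y = (x != y) &&
    (if (x == a) || (y == a) then (if (x == b) || (y == b) then ab else aC)
     else if (x == b) || (y == b) then bC else inC).

(* By [pair_shaped_twins_a], this says that no vertex off the pair is a twin
   of a or of b. *)
Definition pair_twin_free (inC aC bC ab : bool) : bool :=
  ~~ ((inC == aC) && (bC == ab)) && ~~ ((inC == bC) && (aC == ab)).

Lemma pair_shaped_sym (T : finType) (e : rel T) a b inC aC bC ab :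
  pair_shaped e a b inC aC bC ab -> pair_shaped e b a inC bC aC ab.
Proof. by move=> sh x y; rewrite sh; case: (_ || _); case: (_ || _). Qed.

Lemma pair_shaped_relpre (T T' : finType) (f : T -> T') (g : rel T') a b inC aC bC ab :
  injective f -> pair_shaped g (f a) (f b) inC aC bC ab ->
  pair_shaped (relpre f g) a b inC aC bC ab.
Proof. by move=> f_inj sh x y; rewrite /= sh !(inj_eq f_inj). Qed.

Lemma exists_bij_pair (T : finType) n (a b : T) (i0 i1 : 'I_n) :
  #|T| = n -> a != b -> i0 != i1 ->
  exists f : T -> 'I_n, [/\ bijective f, f a = i0 & f b = i1].
Proof.
move=> cardT ab i01.
pose h x := cast_ord cardT (enum_rank x).
have h_inj : injective h by move=> x y /cast_ord_inj/enum_rank_inj.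
pose p := tperm (h a) i0; pose q := tperm (p (h b)) i1.
have pb_i0 : p (h b) != i0.
  by rewrite -[i0](tpermL (h a)) (inj_eq perm_inj) (inj_eq h_inj) eq_sym.
exists (q \o p \o h); split=> /=.
- apply: inj_card_bij; last by rewrite card_ord cardT.
  by move=> x y /perm_inj/perm_inj/h_inj.
- by rewrite tpermL tpermD // eq_sym.
- by rewrite tpermL.
Qed.

Lemma isomorphic_pair_shapedE (T : finType) (e : rel T) n (g : rel 'I_n) (i0 i1 : 'I_n)
    inC aC bC ab :
  #|T| = n -> i0 != i1 -> pair_shaped g i0 i1 inC aC bC ab ->
  isomorphic e g <-> exists a b, a != b /\ pair_shaped e a b inC aC bC ab.
Proof.
move=> cardT i01 g_sh; split.
- case=> f [[f' fK f'K] ef]; exists (f' i0), (f' i1); split; first by rewrite (can_eq f'K).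
  have sh : pair_shaped (relpre f g) (f' i0) (f' i1) inC aC bC ab.
    by apply: pair_shaped_relpre (can_inj fK) _; rewrite !f'K.
  by move=> x y; rewrite ef; apply: sh.
- case=> a [b [a_neq_b sh]]; have [f [f_bij fa fb]] := exists_bij_pair cardT a_neq_b i01.
  exists f; split=> // x y.
  have f_sh : pair_shaped (relpre f g) a b inC aC bC ab.
    by apply: pair_shaped_relpre (bij_inj f_bij) _; rewrite fa fb.
  by rewrite sh; symmetry; apply: f_sh.
Qed.

Section Twins.
Variables (T : finType) (e : rel T).
Hypothesis e_sym : symmetric e.
Hypothesis e_irr : irreflexive e.

Lemma twinsP u v :
  reflect (forall x, x != u -> x != v -> e u x = e v x) (twins e u v).
Proof.
apply: (iffP eqP) => [tw x xu xv | tw].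
  by have := congr1 (fun A : {set T} => x \in A) tw; rewrite /nbhd !inE xu xv.
apply/setP => x; rewrite /nbhd !inE.
case: (eqVneq x u) => [->|xu]; first by rewrite e_irr andbF.
case: (eqVneq x v) => [->|xv]; first by rewrite e_irr andbF.
exact: tw.
Qed.

Lemma twins_sym u v : twins e u v = twins e v u.
Proof. by rewrite /twins eq_sym. Qed.

Lemma twin_class_refl u : u \in twin_class e u.
Proof. by rewrite inE /twins eqxx. Qed.

Lemma twin_class_out u s x :
  s \in twin_class e u -> x != u -> x != s -> e s x = e u x.
Proof. by rewrite inE => /twinsP tw xu xs; rewrite tw. Qed.

Lemma twin_class_in u s t w :
  s \in twin_class e u -> t \in twin_class e u -> w \in twin_class e u ->
  w != u -> s != t -> e s t = e u w.
Proof.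
move=> sC tC wC wu st.
have from_u r : r \in twin_class e u -> r != u -> e u r = e u w.
  move=> rC ru; case: (eqVneq r w) => [-> //|rw].
  by rewrite -(twin_class_out wC ru rw) e_sym (twin_class_out rC) // eq_sym.
case: (eqVneq s u) => [su|su]; first by rewrite su from_u // -su eq_sym.
case: (eqVneq t u) => [tu|tu]; first by rewrite tu e_sym from_u.
by rewrite (twin_class_out sC tu) ?from_u // eq_sym.
Qed.

Lemma pair_shaped_twin_class u a b w :
  a != b -> (forall x, (x \in twin_class e u) = (x != a) && (x != b)) ->
  w \in twin_class e u -> w != u ->
  pair_shaped e a b (e u w) (e u a) (e u b) (e a b).
Proof.
move=> ab memC wC wu x y.
have ba : b != a by rewrite eq_sym.
have [au bu] : a != u /\ b != u.
  by split; apply: contraTneq (twin_class_refl u) => eq_u; rewrite memC -eq_u eqxx ?andbF.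
have off z : (z == a) = false -> (z == b) = false -> z \in twin_class e u.
  by move=> za zb; rewrite memC za zb.
case: (eqVneq x y) => [<-|]; first by rewrite e_irr.
case: (pair_kind a b x) => [->|->|[xa xb]]; case: (pair_kind a b y) => [->|->|[ya yb]] /= xy;
  rewrite ?eqxx ?(negbTE ab) ?(negbTE ba) ?xa ?xb ?ya ?yb ?orbT ?orbF //=.
- by rewrite eqxx in xy.
- by rewrite e_sym (twin_class_out (off y ya yb)) // eq_sym ya.
- by rewrite eqxx in xy.
- by rewrite e_sym (twin_class_out (off y ya yb)) // eq_sym yb.
- by rewrite (twin_class_out (off x xa xb)) // eq_sym xa.
- by rewrite (twin_class_out (off x xa xb)) // eq_sym xb.
- exact: twin_class_in (off x xa xb) (off y ya yb) wC wu xy.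
Qed.

End Twins.

Section PairShaped.
Variables (T : finType) (e : rel T).
Hypotheses (e_sym : symmetric e) (e_irr : irreflexive e).
Variables (a b : T) (inC aC bC ab : bool).
Hypotheses (a_neq_b : a != b) (sh : pair_shaped e a b inC aC bC ab).

Lemma pair_shaped_edge_ab : e a b = ab.
Proof. by rewrite sh a_neq_b !eqxx !orbT. Qed.

Lemma pair_shaped_edge_a s : s != a -> s != b -> e s a = aC.
Proof. by move=> sa sb; rewrite sh sa eqxx orbT (negbTE sb) (negbTE a_neq_b). Qed.

Lemma pair_shaped_edge_b s : s != a -> s != b -> e s b = bC.
Proof.
have b_neq_a : b != a by rewrite eq_sym.
by move=> sa sb; rewrite sh sb eqxx !orbT (negbTE sa) (negbTE b_neq_a).
Qed.

Lemma pair_shaped_edge_in s t :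
  s != a -> s != b -> t != a -> t != b -> s != t -> e s t = inC.
Proof.
by move=> sa sb ta tb st; rewrite sh st (negbTE sa) (negbTE sb) (negbTE ta) (negbTE tb).
Qed.

Lemma pair_shaped_twins_out s t :
  s != a -> s != b -> t != a -> t != b -> twins e s t.
Proof.
move=> sa sb ta tb; apply/(twinsP e_irr) => x xs xt.
case: (eqVneq x a) => [->|xa]; first by rewrite !pair_shaped_edge_a.
case: (eqVneq x b) => [->|xb]; first by rewrite !pair_shaped_edge_b.
by rewrite !pair_shaped_edge_in // eq_sym.
Qed.

Lemma pair_shaped_twins_a s t :
  s != a -> s != b -> t != a -> t != b -> s != t ->
  twins e s a = (inC == aC) && (bC == ab).
Proof.
move=> sa sb ta tb st; have ba : b != a by rewrite eq_sym.
apply/(twinsP e_irr)/andP => [tw | [/eqP inC_aC /eqP bC_ab] x xs xa].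
  have [ts bs] : t != s /\ b != s by rewrite !(eq_sym _ s).
  rewrite -(pair_shaped_edge_in sa sb ta tb st) -(pair_shaped_edge_b sa sb) !tw //.
  by rewrite e_sym pair_shaped_edge_a // pair_shaped_edge_ab !eqxx.
case: (eqVneq x b) => [->|xb]; first by rewrite pair_shaped_edge_b // pair_shaped_edge_ab.
have sx : s != x by rewrite eq_sym.
by rewrite (e_sym a) pair_shaped_edge_a // pair_shaped_edge_in.
Qed.

Lemma pair_shaped_connected s :
  connected_graph e -> s != a -> s != b -> [&& aC || bC, aC || ab & bC || ab].
Proof.
move=> conn sa sb; have b_neq_a : b != a by rewrite eq_sym.
have separated (A : {pred T}) x y : x \in A -> y \notin A -> closed e A -> False.
  by move=> xA yA A_cl; move: (closed_connect A_cl (conn x y)); rewrite xA (negbTE yA).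
apply/and3P; split; apply/negPn/negP; rewrite negb_or => /andP [/negbTE h1 /negbTE h2];
  [ apply: (separated [pred z | (z != a) && (z != b)] s a)
  | apply: (separated (pred1 a) a s) | apply: (separated (pred1 b) b s) ];
  rewrite ?inE ?sa ?sb ?eqxx // => x y /=; rewrite sh h1 h2;
  case: (pair_kind a b x) => [->|->|[xa xb]]; case: (pair_kind a b y) => [->|->|[ya yb]];
  by rewrite !inE ?eqxx ?xa ?xb ?ya ?yb ?(negbTE a_neq_b) ?(negbTE b_neq_a) /= ?andbF.
Qed.

End PairShaped.

Lemma card_off_pair (T : finType) (a b : T) :
  a != b -> #|[set x | (x != a) && (x != b)]| = #|T| - 2.
Proof.
move=> ab; have -> : [set x | (x != a) && (x != b)] = ~: [set a; b].
  by apply/setP => x; rewrite !inE negb_or.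
by move: (cardsC [set a; b]); rewrite cards2 ab; lia.
Qed.

Section TwinNumber.
Variables (T : finType) (e : rel T).
Hypotheses (e_sym : symmetric e) (e_irr : irreflexive e).

Lemma twin_number_pair_shaped a b inC aC bC ab :
  a != b -> 4 <= #|T| -> pair_shaped e a b inC aC bC ab ->
  pair_twin_free inC aC bC ab -> twin_number e = #|T| - 2.
Proof.
move=> a_neq_b cardT sh free; have b_neq_a : b != a by rewrite eq_sym.
set C := [set x | (x != a) && (x != b)].
have cardC : #|C| = #|T| - 2 := card_off_pair a_neq_b.
have no_twin s : s \in C -> ~~ twins e s a && ~~ twins e s b.
  rewrite inE => /andP [sa sb].
  have /card_gt0P [t] : 0 < #|C :\ s|.
    by move: (cardsD1 s C); rewrite inE sa sb cardC; lia.
  rewrite !inE eq_sym => /and3P [st ta tb].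
  rewrite (pair_shaped_twins_a e_sym e_irr a_neq_b sh sa sb ta tb st).
  by rewrite (pair_shaped_twins_a e_sym e_irr b_neq_a (pair_shaped_sym sh) sb sa tb ta st).
have class_C s : s \in C -> twin_class e s = C.
  move=> sC; apply/setP => x; rewrite [x \in twin_class _ _]inE.
  case: (pair_kind a b x) => [->|->|[xa xb]].
  - by rewrite (negbTE (andP (no_twin s sC)).1) inE eqxx.
  - by rewrite (negbTE (andP (no_twin s sC)).2) inE eqxx andbF.
  - move: sC; rewrite !inE xa xb => /andP [sa sb].
    exact: (pair_shaped_twins_out e_irr a_neq_b sh sa sb (negbT xa) (negbT xb)).
have class_pair z : z \notin C -> #|twin_class e z| <= 2.
  move=> zC; apply: leq_trans (_ : #|[set a; b]| <= 2); last by rewrite cards2 a_neq_b.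
  apply/subset_leq_card/subsetP => v; rewrite inE => zv; apply: contraLR zv => vab.
  have vC : v \in C by rewrite inE -negb_or -(in_set2 v a b).
  move: zC; rewrite inE negb_and !negbK twins_sym.
  by case/orP => /eqP ->; case/andP: (no_twin v vC).
apply/eqP; rewrite eqn_leq; apply/andP; split.
  apply/bigmax_leqP => z _; case: (boolP (z \in C)) => zC; first by rewrite class_C // cardC.
  by apply: leq_trans (class_pair z zC) _; lia.
have /card_gt0P [s sC] : 0 < #|C| by rewrite cardC; lia.
by rewrite -cardC -(class_C s sC) (leq_bigmax s).
Qed.

Lemma pair_shaped_of_twin_number :
  4 <= #|T| -> twin_number e = #|T| - 2 ->
  exists a b inC aC bC ab,
    [/\ a != b, pair_shaped e a b inC aC bC ab & pair_twin_free inC aC bC ab].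
Proof.
move=> cardT tw.
have [u max_u] := eq_bigmax (fun u => #|twin_class e u|) (leq_trans (isT : 0 < 4) cardT).
set C := twin_class e u.
have cardC : #|C| = #|T| - 2 by rewrite -tw /twin_number max_u.
have /cards2P [a [b [a_neq_b compl]]] : #|~: C| == 2 by move: (cardsC C); rewrite cardC; lia.
have memC x : (x \in C) = (x != a) && (x != b).
  by rewrite -[x \in C]negbK -in_setC compl !inE negb_or.
have /card_gt0P [w] : 0 < #|C :\ u| by move: (cardsD1 u C); rewrite twin_class_refl cardC; lia.
rewrite in_setD1 => /andP [wu wC].
have sh := pair_shaped_twin_class e_sym e_irr a_neq_b memC wC wu.
exists a, b, (e u w), (e u a), (e u b), (e a b); split=> //.
have /andP [ua ub] : (u != a) && (u != b) by rewrite -memC twin_class_refl.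
have /andP [wa wb] : (w != a) && (w != b) by rewrite -memC.
have [uw b_neq_a] : u != w /\ b != a by split; rewrite eq_sym.
rewrite /pair_twin_free -(pair_shaped_twins_a e_sym e_irr a_neq_b sh ua ub wa wb uw).
rewrite -(pair_shaped_twins_a e_sym e_irr b_neq_a (pair_shaped_sym sh) ub ua wb wa uw).
by move: (memC a) (memC b); rewrite !inE !eqxx andbF => -> ->.
Qed.

End TwinNumber.

Lemma special_pairE n (i0 i1 : 'I_n) (z : 'I_n) :
  val i0 = 0 -> val i1 = 1 -> special z = (z == i0) || (z == i1).
Proof. by move=> h0 h1; rewrite /special -!val_eqE h0 h1; case: z => [[|[|k]] ?]. Qed.

Lemma models_pair_shaped n (i0 i1 : 'I_n) :
  val i0 = 0 -> val i1 = 1 ->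
  [/\ pair_shaped (graph_a n) i0 i1 true true true false,
      pair_shaped (graph_b n) i0 i1 true true false true,
      pair_shaped (graph_c n) i0 i1 false true true false &
      pair_shaped (graph_d n) i0 i1 false true true true].
Proof.
move=> h0 h1; have i01 : i0 != i1 by rewrite -val_eqE h0 h1.
have i10 : i1 != i0 by rewrite eq_sym.
have E0 (z : 'I_n) : (val z == 0) = (z == i0) by rewrite -val_eqE h0.
have E1 (z : 'I_n) : (val z == 1) = (z == i1) by rewrite -val_eqE h1.
split=> x y; rewrite /graph_a /graph_b /graph_c /graph_d ?E0 ?E1 ?(special_pairE _ h0 h1);
  case: (pair_kind i0 i1 x) => [->|->|[xa xb]]; case: (pair_kind i0 i1 y) => [->|->|[ya yb]];
  by rewrite ?eqxx ?[i0 == _]eq_sym ?[i1 == _]eq_sym ?(negbTE i01) ?(negbTE i10)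
             ?xa ?xb ?ya ?yb /= ?andbF.
Qed.

Theorem proposition5 (n : nat) (T : finType) (e : rel T) :
  #|T| = n -> 4 <= n -> simple_graph e -> connected_graph e ->
  (twin_number e = n - 2 <->
     [\/ isomorphic e (graph_a n), isomorphic e (graph_b n),
         isomorphic e (graph_c n) | isomorphic e (graph_d n)]).
Proof.
move=> cardT n_ge4 [e_sym e_irr] conn; have n_gt1 : 1 < n by lia.
pose i0 : 'I_n := Ordinal (ltnW n_gt1); pose i1 : 'I_n := Ordinal n_gt1.
have i01 : i0 != i1 by [].
have [sh_a sh_b sh_c sh_d] := @models_pair_shaped n i0 i1 erefl erefl.
have T_ge4 : 4 <= #|T| by rewrite cardT.
have isoE := isomorphic_pair_shapedE e cardT i01.
split.
- rewrite -{1}cardT => /(pair_shaped_of_twin_number e_sym e_irr T_ge4)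
    [a [b [inC [aC [bC [ab [a_neq_b sh free]]]]]]].
  have /card_gt0P [s] : 0 < #|[set x | (x != a) && (x != b)]| by rewrite card_off_pair //; lia.
  rewrite inE => /andP [sa sb].
  have := pair_shaped_connected a_neq_b sh conn sa sb; move: free sh.
  case: inC aC bC ab => -[] [] [] //= _ sh _.
  + by apply: Or41; apply/(isoE _ _ _ _ _ sh_a); exists a, b.
  + by apply: Or42; apply/(isoE _ _ _ _ _ sh_b); exists a, b.
  + apply: Or42; apply/(isoE _ _ _ _ _ sh_b).
    by exists b, a; rewrite eq_sym; split=> //; apply: pair_shaped_sym.
  + by apply: Or44; apply/(isoE _ _ _ _ _ sh_d); exists a, b.
  + by apply: Or43; apply/(isoE _ _ _ _ _ sh_c); exists a, b.
- case=> [/(isoE _ _ _ _ _ sh_a) | /(isoE _ _ _ _ _ sh_b)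
        | /(isoE _ _ _ _ _ sh_c) | /(isoE _ _ _ _ _ sh_d)] [a [b [a_neq_b sh]]];
    by rewrite -cardT (twin_number_pair_shaped e_sym e_irr a_neq_b T_ge4 sh).
Qed.
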